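(* A positive integer $m$ does not occur in the sequence $(a(n))_{n\ge 0}$ if and only if $m=\lfloor \varphi^2 k+\tfrac12\rfloor$ for some integer $k\ge 1$.
   Context: $\varphi=(1+\sqrt5)/2$. Let $(F_n)_{n\ge 0}$ be the Fibonacci numbers: $F_0=0$, $F_1=1$, $F_n=F_{n-1}+F_{n-2}$ for $n\ge 2$. Define $(a(n))_{n\ge 0}$ (OEIS A105774) by $a(0)=0$, $a(1)=1$, and for $n\ge 2$, $a(n)=F_{j+1}-a(n-F_j)$, where $j\ge 2$ is the unique index with $F_j<n\le F_{j+1}$. *)

From Stdlib Require Import Reals Lia ZArith Arith List.
Import ListNotations.
Open Scope R_scope.

Fixpoint fib (n : nat) : nat :=
  match n with
  | O => 0%nat
  | S p => match p with
           | O => 1%nat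
           | S q => (fib p + fib q)%nat
           end
  end.

(* The unique j >= 2 with F_j < n <= F_{j+1} (for n >= 2): search upward
   from j = 2; since F_{j+1} >= j, a search bound of n suffices. *)
Fixpoint find_j_aux (fuel j n : nat) : nat :=
  match fuel with
  | O => j
  | S f => if Nat.leb n (fib (S j)) then j else find_j_aux f (S j) n
  end.
Definition find_j (n : nat) : nat := find_j_aux n 2 n.

(* Fuel-based evaluation of A105774; fuel n suffices since the argument
   strictly decreases (F_j >= 1). *)
Fixpoint a_aux (fuel n : nat) : nat :=
  match fuel with
  | O => 0%nat
  | S f =>
      match n with
      | O => 0%nat
      | S O => 1%nat
      | _ => let j := find_j n in
             (fib (S j) - a_aux f (n - fib j))%nat
      end
  end.

Definition a (n : nat) : nat := a_aux n n.

Definition phi : R := (1 + sqrt 5) / 2.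

(* floor x = the integer z with IZR z <= x < IZR z + 1 (Stdlib's up x
   satisfies x < up x <= x + 1). *)
Definition floorR (x : R) : Z := (up x - 1)%Z.

Example a_check : List.map a (List.seq 0 14) = [0;1;1;2;4;4;7;7;6;12;12;11;9;9]%nat.
Proof. vm_compute. reflexivity. Qed.

From Stdlib Require Import Reals ZArith Lia Lra Psatz Arith Classical.

(* On the block (F_{n+1}, F_{n+2}] the recursion sends a(i) to F_{n+2} - a(i - F_{n+1}),
   so the values of a on the block are those on [1, F_n] reflected through
   x |-> F_{n+2} - x.  The theorem therefore follows by induction over blocks once the
   Beatty set B = {floor(phi^2 k + 1/2) : k >= 1} is shown to be invariant under the same
   reflection on [F_{n+1}, F_{n+2}), i.e.
     floor(phi^2 (F_n - k) + 1/2) + floor(phi^2 k + 1/2) = F_{n+2}   for 1 <= k <= F_{n-2}.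
   As phi^2 F_n = F_{n+2} - psi^n, this says that the fractional part of phi^2 k + 1/2
   never lies within psi^n of 0 or 1 (on the relevant side), a Diophantine property of
   sqrt 5: for d = sqrt 5 k - c either |5k^2 - c^2| >= 2, and then |d| > 2|psi|^n, or
   (c, k) solves the Pell equation c^2 - 5k^2 = +-1, and then d = -psi^m with m < n. *)

Section Sequence.
Local Open Scope nat_scope.

Lemma fib_SS n : fib (S (S n)) = fib (S n) + fib n.
Proof. reflexivity. Qed.

Lemma fib_le_S n : fib n <= fib (S n).
Proof. destruct n as [|[|n]]; rewrite ?fib_SS; simpl; lia. Qed.

Lemma fib_le_mono m n : m <= n -> fib m <= fib n.
Proof. induction 1; [lia|]. pose proof (fib_le_S m0). lia. Qed.

Lemma fib_pos n : 1 <= n -> 1 <= fib n.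
Proof. intros H. apply (fib_le_mono 1 n H). Qed.

Lemma le_fib_S n : n <= fib (S n).
Proof.
  induction n as [|n IH]; [simpl; lia|].
  rewrite fib_SS. destruct n; [simpl; lia|]. pose proof (fib_pos (S n)). lia.
Qed.

Lemma find_j_aux_spec n fuel j : 2 <= j -> fib j < n -> n <= fib (S (j + fuel)) ->
  let j' := find_j_aux fuel j n in 2 <= j' /\ fib j' < n <= fib (S j').
Proof.
  revert j; induction fuel as [|fuel IH]; intros j Hj Hlo Hhi; cbn [find_j_aux].
  - rewrite Nat.add_0_r in Hhi. lia.
  - destruct (Nat.leb_spec n (fib (S j))); [lia|].
    apply IH; [lia | lia | now rewrite Nat.add_succ_comm].
Qed.

Lemma find_j_spec n : 2 <= n -> 2 <= find_j n /\ fib (find_j n) < n <= fib (S (find_j n)).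
Proof.
  intros Hn. apply find_j_aux_spec; [lia | simpl; lia |].
  pose proof (le_fib_S (S (S n))). simpl (2 + n). lia.
Qed.

Lemma a_aux_fuel f1 f2 n : n <= f1 -> n <= f2 -> a_aux f1 n = a_aux f2 n.
Proof.
  revert f2 n; induction f1 as [|f1 IH]; intros [|f2] n H1 H2;
    try (replace n with 0 by lia; reflexivity).
  destruct n as [|[|n]]; try reflexivity. cbn [a_aux].
  destruct (find_j_spec (S (S n)) ltac:(lia)) as [Hj _].
  pose proof (fib_pos (find_j (S (S n))) ltac:(lia)).
  f_equal. apply IH; lia.
Qed.

Lemma a_recursion n j : 2 <= j -> fib j < n <= fib (S j) -> a n = fib (S j) - a (n - fib j).
Proof.
  intros Hj Hn.
  pose proof (fib_le_mono 2 j Hj) as Hfj. simpl in Hfj.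
  assert (Ej : find_j n = j).
  { destruct (find_j_spec n ltac:(lia)) as (H2 & Hlo & Hhi).
    destruct (Nat.lt_trichotomy (find_j n) j) as [L|[L|L]]; [|exact L|].
    - pose proof (fib_le_mono _ _ L). lia.
    - pose proof (fib_le_mono _ _ L). lia. }
  destruct n as [|[|n']]; [lia|lia|].
  change (a (S (S n'))) with
    (fib (S (find_j (S (S n')))) - a_aux (S n') (S (S n') - fib (find_j (S (S n'))))).
  rewrite Ej. f_equal. apply a_aux_fuel; lia.
Qed.

End Sequence.

Section FiveNotSquare.
Local Open Scope Z_scope.

Lemma five_dvd_of_dvd_sq c : (5 | c * c) -> (5 | c).
Proof.
  intros Hc. apply Z.mod_divide; [lia|]. apply Z.mod_divide in Hc; [|lia].
  rewrite Z.mul_mod in Hc by lia.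
  pose proof (Z.mod_pos_bound c 5 ltac:(lia)).
  assert (Hr : c mod 5 = 0 \/ c mod 5 = 1 \/ c mod 5 = 2 \/ c mod 5 = 3 \/ c mod 5 = 4) by lia.
  destruct Hr as [E|[E|[E|[E|E]]]]; rewrite E in Hc; easy.
Qed.

Lemma sq_neq_five_mul_sq k c : 1 <= k -> c * c <> 5 * (k * k).
Proof.
  intros Hk. revert c. generalize Hk. pattern k; apply Z_lt_induction; [|lia]. clear k Hk.
  intros k IH Hk c Hck.
  destruct (five_dvd_of_dvd_sq c) as [c' ->]; [exists (k * k); lia|].
  destruct (five_dvd_of_dvd_sq k) as [k' ->]; [exists (c' * c'); lia|].
  apply (IH k' ltac:(nia) ltac:(nia) c'). nia.
Qed.

End FiveNotSquare.

Local Open Scope R_scope.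

Definition psi : R := (1 - sqrt 5) / 2.

Lemma sqrt5_sq : sqrt 5 * sqrt 5 = 5.
Proof. apply sqrt_sqrt. lra. Qed.

Lemma sqrt5_bounds : 2.236 < sqrt 5 < 2.237.
Proof.
  pose proof sqrt5_sq. pose proof (sqrt_pos 5). nra.
Qed.

Lemma phi_sq : phi ^ 2 = phi + 1.
Proof. unfold phi. pose proof sqrt5_sq. nra. Qed.

Lemma psi_sq : psi ^ 2 = psi + 1.
Proof. unfold psi. pose proof sqrt5_sq. nra. Qed.

Lemma phi_sq_sqrt5 : phi ^ 2 = (3 + sqrt 5) / 2.
Proof. rewrite phi_sq. unfold phi. lra. Qed.

Lemma phi_cube : phi ^ 3 = 2 + sqrt 5.
Proof.
  replace (phi ^ 3) with (phi ^ 2 * phi) by ring. rewrite phi_sq.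
  replace ((phi + 1) * phi) with (phi ^ 2 + phi) by ring. rewrite phi_sq.
  unfold phi. lra.
Qed.

Lemma psi_cube : psi ^ 3 = 2 - sqrt 5.
Proof.
  replace (psi ^ 3) with (psi ^ 2 * psi) by ring. rewrite psi_sq.
  replace ((psi + 1) * psi) with (psi ^ 2 + psi) by ring. rewrite psi_sq.
  unfold psi. lra.
Qed.

Lemma phi_gt_1 : 1 < phi.
Proof. unfold phi. pose proof sqrt5_bounds. lra. Qed.

Lemma psi_neq_0 : psi <> 0.
Proof. unfold psi. pose proof sqrt5_bounds. lra. Qed.

Lemma abs_psi_pow_mul_phi_pow n : Rabs (psi ^ n) * phi ^ n = 1.
Proof.
  pose proof phi_gt_1.
  rewrite <- (Rabs_right (phi ^ n)) by (apply Rle_ge, pow_le; lra).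
  rewrite <- Rabs_mult, <- Rpow_mult_distr.
  replace (psi * phi) with (-1) by (unfold psi, phi; pose proof sqrt5_sq; nra).
  apply pow_1_abs.
Qed.

Lemma abs_psi_pow_le m n : (m <= n)%nat -> Rabs (psi ^ n) <= Rabs (psi ^ m).
Proof.
  intros Hmn. pose proof phi_gt_1.
  pose proof (abs_psi_pow_mul_phi_pow m). pose proof (abs_psi_pow_mul_phi_pow n).
  pose proof (Rle_pow phi m n ltac:(lra) Hmn). pose proof (pow_lt phi m ltac:(lra)).
  pose proof (Rabs_pos (psi ^ n)). nra.
Qed.

Lemma abs_psi_pow_lt_half n : (2 <= n)%nat -> Rabs (psi ^ n) < 1 / 2.
Proof.
  intros Hn. pose proof (abs_psi_pow_le 2 n Hn) as Hle.
  rewrite <- (RPow_abs psi 2), pow2_abs, psi_sq in Hle.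
  assert (psi + 1 < 1 / 2) by (unfold psi; pose proof sqrt5_bounds; lra). lra.
Qed.

Lemma one_sub_twice_psi_pow_pos j : (1 <= j)%nat -> 0 < 1 - 2 * psi ^ j.
Proof.
  intros Hj. destruct (Nat.eq_dec j 1) as [->|Hj1].
  - unfold psi. pose proof sqrt5_bounds. simpl. lra.
  - pose proof (abs_psi_pow_lt_half j ltac:(lia)). pose proof (Rle_abs (psi ^ j)). lra.
Qed.

Lemma binet n : sqrt 5 * INR (fib n) = phi ^ n - psi ^ n.
Proof.
  enough (H : sqrt 5 * INR (fib n) = phi ^ n - psi ^ n /\
              sqrt 5 * INR (fib (S n)) = phi ^ S n - psi ^ S n) by apply H.
  induction n as [|n [IH1 IH2]]; [unfold phi, psi; simpl; lra|].
  split; [exact IH2|].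
  replace (fib (S (S n))) with (fib (S n) + fib n)%nat by reflexivity.
  rewrite plus_INR, Rmult_plus_distr_l, IH1, IH2.
  replace (phi ^ S (S n)) with (phi ^ n * phi ^ 2) by (simpl; ring).
  replace (psi ^ S (S n)) with (psi ^ n * psi ^ 2) by (simpl; ring).
  rewrite phi_sq, psi_sq. simpl. ring.
Qed.

Lemma phi_sq_mul_fib n : phi ^ 2 * INR (fib n) = INR (fib (S (S n))) - psi ^ n.
Proof.
  apply (Rmult_eq_reg_l (sqrt 5)); [|pose proof sqrt5_bounds; lra].
  rewrite Rmult_minus_distr_l, <- Rmult_assoc, (Rmult_comm (sqrt 5)), Rmult_assoc, !binet.
  replace (phi ^ S (S n)) with (phi ^ n * phi ^ 2) by (simpl; ring).
  replace (psi ^ S (S n)) with (psi ^ n * psi ^ 2) by (simpl; ring).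
  unfold phi, psi. pose proof sqrt5_sq. simpl. nra.
Qed.

Lemma pell_unit_eq_psi_pow (c k : Z) : (0 <= c)%Z -> (0 <= k)%Z ->
  (c * c - 5 * (k * k) = 1 \/ c * c - 5 * (k * k) = -1)%Z ->
  exists m, IZR c - sqrt 5 * IZR k = psi ^ m.
Proof.
  intros Hc Hk. revert c Hc. generalize Hk. pattern k; apply Z_lt_induction; [|exact Hk].
  clear k Hk. intros k IH Hk c Hc Hpell.
  destruct (Z.eq_dec k 0) as [->|Hk0].
  { exists 0%nat. assert (c = 1)%Z by nia. subst c. simpl. lra. }
  (* Descent (c, k) |-> (5k - 2c, c - 2k): it divides c - sqrt 5 k by psi^3 = 2 - sqrt 5. *)
  assert (H2k : (2 * k <= c)%Z) by nia.
  assert (H3k : (c < 3 * k)%Z) by nia.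
  assert (H5k : (2 * c <= 5 * k)%Z) by nia.
  destruct (IH (c - 2 * k)%Z ltac:(lia) ltac:(lia) (5 * k - 2 * c)%Z ltac:(lia) ltac:(nia))
    as [m Hm].
  exists (3 + m)%nat. rewrite pow_add, psi_cube, <- Hm, !minus_IZR, !mult_IZR.
  pose proof (f_equal (Rmult (IZR c)) sqrt5_sq). pose proof (f_equal (Rmult (IZR k)) sqrt5_sq).
  lra.
Qed.

Lemma sqrt5_mul_add_lt_phi_pow q k c : (3 <= q)%nat -> (1 <= k <= Z.of_nat (fib q))%Z ->
  Rabs (sqrt 5 * IZR k - IZR c) < 2 -> 0 < sqrt 5 * IZR k + IZR c < phi ^ S (S q).
Proof.
  intros Hq Hk Hd. apply Rabs_def2 in Hd.
  pose proof sqrt5_bounds.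
  assert (Hk1 : 1 <= IZR k) by (apply IZR_le; lia).
  assert (HkF : IZR k <= INR (fib q)) by (rewrite INR_IZR_INZ; apply IZR_le; lia).
  split; [nra|].
  assert (HF : sqrt 5 * INR (fib q) <= phi ^ q + (sqrt 5 - 2)).
  { rewrite binet.
    pose proof (abs_psi_pow_le 3 q Hq) as Hle.
    rewrite psi_cube, (Rabs_left (2 - sqrt 5)) in Hle by lra.
    pose proof (Rle_abs (- psi ^ q)). rewrite Rabs_Ropp in *. lra. }
  assert (Hphi : 2 + sqrt 5 <= phi ^ q).
  { rewrite <- phi_cube. apply Rle_pow; [pose proof phi_gt_1; lra | exact Hq]. }
  replace (phi ^ S (S q)) with (phi ^ q * phi ^ 2) by (simpl; ring).
  rewrite phi_sq. unfold phi in *. nra.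
Qed.

Lemma sqrt5_mul_approx_sign q k c : (3 <= q)%nat -> (1 <= k <= Z.of_nat (fib q))%Z ->
  Rabs (sqrt 5 * IZR k - IZR c) < 2 ->
  0 < (sqrt 5 * IZR k - IZR c) * (sqrt 5 * IZR k - IZR c + 2 * psi ^ S (S q)).
Proof.
  intros Hq Hk Hd.
  destruct (sqrt5_mul_add_lt_phi_pow q k c Hq Hk Hd) as [Hg0 Hg].
  set (n := S (S q)) in *. set (e := psi ^ n).
  set (d := sqrt 5 * IZR k - IZR c) in *. set (g := sqrt 5 * IZR k + IZR c) in *.
  assert (HN : IZR (5 * (k * k) - c * c) = d * g).
  { unfold d, g. rewrite minus_IZR, !mult_IZR. pose proof sqrt5_sq. nra. }
  assert (HN0 : (5 * (k * k) - c * c <> 0)%Z).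
  { pose proof (sq_neq_five_mul_sq k c ltac:(lia)). lia. }
  assert (HNabs : IZR (Z.abs (5 * (k * k) - c * c)) = Rabs d * g).
  { rewrite abs_IZR, HN, Rabs_mult, (Rabs_right g) by lra. reflexivity. }
  pose proof (abs_psi_pow_mul_phi_pow n) as He. fold e in He.
  destruct (Z_le_gt_dec 2 (Z.abs (5 * (k * k) - c * c))) as [Hbig|Hone].
  - apply IZR_le in Hbig. rewrite HNabs in Hbig.
    assert (Hd0 : 0 < Rabs d) by (pose proof (Rabs_pos d); nra).
    assert (Hde : 2 * Rabs e < Rabs d).
    { assert (Rabs d * g < Rabs d * phi ^ n) by (apply Rmult_lt_compat_l; lra).
      pose proof (pow_lt phi n ltac:(pose proof phi_gt_1; lra)). nra. }
    assert (Hsq : d * d = Rabs d * Rabs d)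
      by (rewrite <- Rabs_mult; symmetry; apply Rabs_right; nra).
    pose proof (Rle_abs (- (d * e))). rewrite Rabs_Ropp, Rabs_mult in *.
    pose proof (Rabs_pos e). nra.
  - assert (Hc : (0 <= c)%Z).
    { apply le_IZR. apply Rabs_def2 in Hd. unfold d in Hd. pose proof sqrt5_bounds.
      assert (1 <= IZR k) by (apply IZR_le; lia). nra. }
    destruct (pell_unit_eq_psi_pow c k Hc ltac:(lia) ltac:(nia)) as [m Hm].
    assert (Hdm : d = - psi ^ m) by (unfold d; lra).
    assert (Hgm : g = phi ^ m).
    { pose proof (abs_psi_pow_mul_phi_pow m) as Hm1.
      assert (Hone' : Rabs d * g = 1).
      { rewrite <- HNabs. replace (Z.abs _) with 1%Z by lia. reflexivity. }
      rewrite Hdm, Rabs_Ropp in Hone'.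
      assert (0 < Rabs (psi ^ m)) by apply Rabs_pos_lt, pow_nonzero, psi_neq_0.
      nra. }
    assert (Hmn : (m < n)%nat).
    { destruct (Nat.lt_ge_cases m n) as [L|L]; [exact L|].
      pose proof (Rle_pow phi n m ltac:(pose proof phi_gt_1; lra) L). lra. }
    unfold e. replace n with (m + (n - m))%nat by lia. rewrite pow_add, Hdm.
    pose proof (one_sub_twice_psi_pow_pos (n - m) ltac:(lia)).
    assert (0 < psi ^ m * psi ^ m) by apply Rsqr_pos_lt, pow_nonzero, psi_neq_0.
    nra.
Qed.

Lemma floorR_spec x : IZR (floorR x) <= x < IZR (floorR x) + 1.
Proof. unfold floorR. rewrite minus_IZR. destruct (archimed x). lra. Qed.

Lemma floorR_unique x z : IZR z <= x < IZR z + 1 -> floorR x = z.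
Proof.
  intros Hx. unfold floorR. rewrite <- (tech_up x (z + 1)); [lia | |]; rewrite plus_IZR; lra.
Qed.

Definition beatty (k : Z) : Z := floorR (phi ^ 2 * IZR k + 1 / 2).

Lemma beatty_lt k k' : (k < k')%Z -> (beatty k < beatty k')%Z.
Proof.
  intros Hkk. apply lt_IZR. unfold beatty.
  pose proof (floorR_spec (phi ^ 2 * IZR k + 1 / 2)).
  pose proof (floorR_spec (phi ^ 2 * IZR k' + 1 / 2)).
  assert (IZR k + 1 <= IZR k') by (rewrite <- plus_IZR; apply IZR_le; lia).
  rewrite phi_sq_sqrt5 in *. pose proof sqrt5_bounds. nra.
Qed.

Lemma beatty_1 : beatty 1 = 3%Z.
Proof. apply floorR_unique. rewrite phi_sq_sqrt5. pose proof sqrt5_bounds. lra. Qed.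

Lemma beatty_2 : beatty 2 = 5%Z.
Proof. apply floorR_unique. rewrite phi_sq_sqrt5. pose proof sqrt5_bounds. lra. Qed.

Lemma beatty_fib n : (2 <= n)%nat -> beatty (Z.of_nat (fib n)) = Z.of_nat (fib (S (S n))).
Proof.
  intros Hn. apply floorR_unique.
  rewrite <- !INR_IZR_INZ, phi_sq_mul_fib.
  pose proof (abs_psi_pow_lt_half n Hn). pose proof (Rle_abs (psi ^ n)).
  pose proof (Rle_abs (- psi ^ n)). rewrite Rabs_Ropp in *. lra.
Qed.

Lemma beatty_reflect q k : (2 <= q)%nat -> (1 <= k <= Z.of_nat (fib q))%Z ->
  (beatty (Z.of_nat (fib (S (S q))) - k) + beatty k = Z.of_nat (fib (S (S (S (S q))))))%Z.
Proof.
  intros Hq Hk.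
  destruct (Nat.eq_dec q 2) as [->|Hq3].
  { replace k with 1%Z by (simpl in Hk; lia). simpl.
    change (3 - 1)%Z with 2%Z. rewrite beatty_1, beatty_2. reflexivity. }
  pose proof (floorR_spec (phi ^ 2 * IZR k + 1 / 2)) as Hz. fold (beatty k) in Hz.
  set (z := beatty k) in *.
  set (f := phi ^ 2 * IZR k + 1 / 2 - IZR z).
  assert (Hc1 : sqrt 5 * IZR k - IZR (2 * z - 3 * k - 1) = 2 * f).
  { unfold f. rewrite !minus_IZR, !mult_IZR, phi_sq_sqrt5. lra. }
  assert (Hc2 : sqrt 5 * IZR k - IZR (2 * z - 3 * k + 1) = 2 * f - 2).
  { unfold f. rewrite plus_IZR, !minus_IZR, !mult_IZR, phi_sq_sqrt5. lra. }
  pose proof (sqrt5_mul_approx_sign q k (2 * z - 3 * k - 1) ltac:(lia) Hk) as Hlo.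
  pose proof (sqrt5_mul_approx_sign q k (2 * z - 3 * k + 1) ltac:(lia) Hk) as Hhi.
  rewrite Hc1 in Hlo. rewrite Hc2 in Hhi.
  set (e := psi ^ S (S q)) in *.
  assert (Hf : 0 <= f < 1) by (unfold f; lra).
  specialize (Hlo ltac:(rewrite Rabs_right; lra)).
  assert (Hfe : 0 < f + e) by nra.
  assert (Hf0 : 0 < f) by nra.
  specialize (Hhi ltac:(rewrite Rabs_left1; lra)).
  assert (Hfe' : f + e < 1) by nra.
  enough (beatty (Z.of_nat (fib (S (S q))) - k) = Z.of_nat (fib (S (S (S (S q))))) - z)%Z by lia.
  apply floorR_unique.
  rewrite !minus_IZR, <- !INR_IZR_INZ, Rmult_minus_distr_l, phi_sq_mul_fib.
  fold e. unfold f in *. lra.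
Qed.

Definition is_beatty (m : nat) : Prop := exists k, (1 <= k)%Z /\ Z.of_nat m = beatty k.

Lemma is_beatty_fib n : (2 <= n)%nat -> is_beatty (fib (S (S n))).
Proof.
  intros Hn. exists (Z.of_nat (fib n)).
  split; [pose proof (fib_pos n ltac:(lia)); lia | symmetry; apply beatty_fib, Hn].
Qed.

Lemma is_beatty_small m : is_beatty m -> m = 3%nat \/ m = 5%nat \/ (5 < m)%nat.
Proof.
  intros [k [Hk Hm]].
  destruct (Z.eq_dec k 1) as [->|Hk1]; [rewrite beatty_1 in Hm; lia|].
  destruct (Z.eq_dec k 2) as [->|Hk2]; [rewrite beatty_2 in Hm; lia|].
  pose proof (beatty_lt 2 k ltac:(lia)). rewrite beatty_2 in *. lia.
Qed.

Lemma is_beatty_reflect q x : (2 <= q)%nat ->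
  (fib (S (S (S q))) <= x < fib (S (S (S (S q)))))%nat ->
  is_beatty x <-> is_beatty (fib (S (S (S (S q)))) - x).
Proof.
  intros Hq Hx.
  pose proof (beatty_fib q Hq) as B0.
  pose proof (beatty_fib (S q) ltac:(lia)) as B1.
  pose proof (beatty_fib (S (S q)) ltac:(lia)) as B2.
  pose proof (fib_pos q ltac:(lia)). pose proof (fib_pos (S q) ltac:(lia)).
  pose proof (fib_SS q). pose proof (fib_SS (S q)). pose proof (fib_SS (S (S q))).
  split.
  - intros [k [Hk Ek]].
    assert (Hk1 : (Z.of_nat (fib (S q)) <= k)%Z).
    { destruct (Z_lt_le_dec k (Z.of_nat (fib (S q)))) as [L|L]; [|exact L].
      pose proof (beatty_lt _ _ L). lia. }
    assert (Hk2 : (k < Z.of_nat (fib (S (S q))))%Z).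
    { destruct (Z_lt_le_dec k (Z.of_nat (fib (S (S q))))) as [L|L]; [exact L|].
      destruct (Z.eq_dec k (Z.of_nat (fib (S (S q))))) as [E|E]; [subst k; lia|].
      pose proof (beatty_lt (Z.of_nat (fib (S (S q)))) k ltac:(lia)). lia. }
    exists (Z.of_nat (fib (S (S q))) - k)%Z. split; [lia|].
    pose proof (beatty_reflect q (Z.of_nat (fib (S (S q))) - k) Hq ltac:(lia)) as R.
    replace (Z.of_nat (fib (S (S q))) - (Z.of_nat (fib (S (S q))) - k))%Z with k in R by lia.
    lia.
  - intros [k [Hk Ek]].
    assert (Hkq : (k <= Z.of_nat (fib q))%Z).
    { destruct (Z_le_gt_dec k (Z.of_nat (fib q))) as [L|L]; [exact L|].
      pose proof (beatty_lt (Z.of_nat (fib q)) k ltac:(lia)). lia. }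
    exists (Z.of_nat (fib (S (S q))) - k)%Z. split; [lia|].
    pose proof (beatty_reflect q k Hq ltac:(lia)). lia.
Qed.

Definition a_image_spec (n : nat) : Prop :=
  forall m, (exists i, (1 <= i <= fib n)%nat /\ a i = m) <->
            (1 <= m <= fib n)%nat /\ ~ is_beatty m.

Lemma a_image_spec_4 : a_image_spec 4.
Proof.
  intros m. change (fib 4) with 3%nat. split.
  - intros [i [Hi <-]].
    assert (Hc : (i = 1 \/ i = 2 \/ i = 3)%nat) by lia.
    destruct Hc as [->|[->| ->]]; vm_compute a;
      (split; [lia|]); intros Hb; apply is_beatty_small in Hb; lia.
  - intros [Hm Hb].
    assert (Hc : (m = 1 \/ m = 2 \/ m = 3)%nat) by lia.
    destruct Hc as [->|[->| ->]].
    + exists 1%nat. split; [lia|reflexivity].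
    + exists 3%nat. split; [lia|reflexivity].
    + exfalso. apply Hb, (is_beatty_fib 2). lia.
Qed.

Lemma a_image_spec_5 : a_image_spec 5.
Proof.
  intros m. change (fib 5) with 5%nat. split.
  - intros [i [Hi <-]].
    assert (Hc : (i = 1 \/ i = 2 \/ i = 3 \/ i = 4 \/ i = 5)%nat) by lia.
    destruct Hc as [->|[->|[->|[->| ->]]]]; vm_compute a;
      (split; [lia|]); intros Hb; apply is_beatty_small in Hb; lia.
  - intros [Hm Hb].
    assert (Hc : (m = 1 \/ m = 2 \/ m = 3 \/ m = 4 \/ m = 5)%nat) by lia.
    destruct Hc as [->|[->|[->|[->| ->]]]].
    + exists 1%nat. split; [lia|reflexivity].
    + exists 3%nat. split; [lia|reflexivity].
    + exfalso. apply Hb, (is_beatty_fib 2). lia.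
    + exists 4%nat. split; [lia|reflexivity].
    + exfalso. apply Hb, (is_beatty_fib 3). lia.
Qed.

Lemma a_image_spec_SS q : (2 <= q)%nat ->
  a_image_spec (S (S q)) -> a_image_spec (S (S (S q))) -> a_image_spec (S (S (S (S q)))).
Proof.
  intros Hq P2 P3 m.
  set (F2 := fib (S (S q))) in *. set (F3 := fib (S (S (S q)))) in *.
  set (F4 := fib (S (S (S (S q))))) in *.
  assert (HF4 : F4 = (F3 + F2)%nat) by reflexivity.
  pose proof (fib_pos (S (S q)) ltac:(lia)). pose proof (fib_pos (S (S (S q))) ltac:(lia)).
  assert (Hrec : forall i, (F3 < i <= F4)%nat -> a i = (F4 - a (i - F3))%nat).
  { intros i Hi. apply a_recursion; [lia | exact Hi]. }
  assert (Hrefl := is_beatty_reflect q m Hq).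
  split.
  - intros [i [Hi Ha]].
    destruct (Nat.le_gt_cases i F3) as [L|L].
    + destruct (proj1 (P3 m) (ex_intro _ i (conj (conj (proj1 Hi) L) Ha))) as [H1 H2].
      split; [lia|exact H2].
    + rewrite Hrec in Ha by lia.
      assert (HT : exists i', (1 <= i' <= F2)%nat /\ a i' = a (i - F3))
        by (exists (i - F3)%nat; split; [lia|reflexivity]).
      destruct (proj1 (P2 _) HT) as [H1 H2].
      split; [lia|]. intros Hb. apply H2.
      replace (a (i - F3)) with (F4 - m)%nat by lia.
      apply Hrefl; [lia|exact Hb].
  - intros [Hm Hb].
    destruct (Nat.le_gt_cases m F3) as [L|L].
    + destruct (proj2 (P3 m) (conj (conj (proj1 Hm) L) Hb)) as [i [Hi Ha]].
      exists i. split; [lia|exact Ha].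
    + assert (Hne : m <> F4) by (intros ->; apply Hb, is_beatty_fib; lia).
      assert (Ht : ~ is_beatty (F4 - m)) by (intros Htb; apply Hb, Hrefl; [lia|exact Htb]).
      assert (Hrange : (1 <= F4 - m <= F2)%nat) by lia.
      destruct (proj2 (P2 (F4 - m)%nat) (conj Hrange Ht)) as [i [Hi Ha]].
      exists (i + F3)%nat. split; [lia|].
      rewrite Hrec by lia. replace (i + F3 - F3)%nat with i by lia. lia.
Qed.

Lemma a_image_spec_ge_4 d : a_image_spec (4 + d) /\ a_image_spec (5 + d).
Proof.
  induction d as [|d [IH4 IH5]]; [split; [exact a_image_spec_4 | exact a_image_spec_5]|].
  split; [exact IH5|]. apply (a_image_spec_SS (S (S d))); [lia | exact IH4 | exact IH5].
Qed.

Theorem proposition5 (m : nat) (hm : (1 <= m)%nat) :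
  (forall n : nat, a n <> m) <->
  (exists k : Z, (1 <= k)%Z /\ Z.of_nat m = floorR (phi ^ 2 * IZR k + 1 / 2)).
Proof.
  change ((forall n : nat, a n <> m) <-> is_beatty m).
  assert (Hfib : forall n, (n <= fib (4 + n))%nat).
  { intros n. pose proof (le_fib_S n). pose proof (fib_le_mono (S n) (4 + n) ltac:(lia)). lia. }
  split.
  - intros Hmiss. apply NNPP. intros Hb.
    destruct (proj2 (proj1 (a_image_spec_ge_4 m) m) (conj (conj hm (Hfib m)) Hb))
      as [i [_ Hi]].
    exact (Hmiss i Hi).
  - intros Hb n Ha.
    destruct n as [|n]; [change (a 0) with 0%nat in Ha; lia|].
    refine (proj2 (proj1 (proj1 (a_image_spec_ge_4 (S n)) m) _) Hb).
    exists (S n). split; [pose proof (Hfib (S n)); lia | exact Ha].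
Qed.
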